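(* Let $\mathcal A$ be a category with finite colimits and initial object $\emptyset$, let $(\mathcal B,\Theta)$ be a category with nullhomotopies satisfying the reduced interchange, and let $\mathcal F\colon\mathcal A\to\mathcal B$ be a functor such that (a) $\mathcal F$ sends finite colimits of $\mathcal A$ to finite colimits of $\mathcal B$ which are $\Theta$-strong, and (b) for every arrow $a$ of $\mathcal A$, the arrow $\mathcal F(a)$ has a strong $\Theta$-cokernel in $\mathcal B$. Then there exists a morphism of categories with nullhomotopies $\widehat{\mathcal F}\colon(\mathrm{Arr}(\mathcal A),\Theta_\Delta)\to(\mathcal B,\Theta)$ which sends $\Theta_\Delta$-cokernels to strong $\Theta$-cokernels and satisfies $\Gamma\cdot\widehat{\mathcal F}\cong\mathcal F$; moreover such a morphism is unique up to isomorphism. Furthermore, $\widehat{\mathcal F}$ sends finite colimits of $\mathrm{Arr}(\mathcal A)$ to finite colimits of $\mathcal B$ which are $\Theta$-strong.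
   Context: Composition is written diagrammatically: for $f\colon A\to B$, $g\colon B\to C$, $f\cdot g\colon A\to C$. A structure of nullhomotopies $\Theta$ on a category $\mathcal B$ consists of: for each arrow $g$ a set $\Theta(g)$ (nullhomotopies on $g$), and for each composable $A\xrightarrow{f}B\xrightarrow{g}C\xrightarrow{h}D$ a map $f\circ-\circ h\colon\Theta(g)\to\Theta(f\cdot g\cdot h)$ such that $(f'\cdot f)\circ\varphi\circ(h\cdot h')=f'\circ(f\circ\varphi\circ h)\circ h'$ and $\mathrm{id}\circ\varphi\circ\mathrm{id}=\varphi$. One writes $f\circ\varphi$ and $\varphi\circ h$ when the other arrow is an identity. Reduced interchange: for all $f\colon A\to B$, $g\colon B\to C$, $\alpha\in\Theta(f)$, $\beta\in\Theta(g)$, one has $\alpha\circ g=f\circ\beta$ in $\Theta(f\cdot g)$. $\mathrm{Arr}(\mathcal A)$: objects are arrows $b\colon B\to B_0$ of $\mathcal A$, written $(B,b,B_0)$; arrows $(g,g_0)\colon(B,b,B_0)\to(C,c,C_0)$ are pairs with $b\cdot g_0=g\cdot c$. Its structure $\Theta_\Delta$: $\Theta_\Delta(g,g_0)=\{\varphi\colon B_0\to C\mid b\cdot\varphi=g,\ \varphi\cdot c=g_0\}$, with $(f,f_0)\circ\varphi\circ(h,h_0)=f_0\cdot\varphi\cdot h$. $\Gamma\colon\mathcal A\to\mathrm{Arr}(\mathcal A)$ sends $X$ to $(\emptyset,\emptyset_X,X)$ (where $\emptyset_X\colon\emptyset\to X$ is the unique arrow) and $g_0$ to $(\mathrm{id}_\emptyset,g_0)$.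 A morphism $\mathcal F\colon(\mathcal A,\Theta_{\mathcal A})\to(\mathcal B,\Theta_{\mathcal B})$ is a functor with maps $\mathcal F_g\colon\Theta_{\mathcal A}(g)\to\Theta_{\mathcal B}(\mathcal F g)$ such that $\mathcal F_{f\cdot g\cdot h}(f\circ\varphi\circ h)=\mathcal F f\circ\mathcal F_g(\varphi)\circ\mathcal F h$. A 2-morphism $\alpha\colon\mathcal F\Rightarrow\mathcal G$ between morphisms is a natural transformation with $\alpha_B\circ\mathcal G_g(\varphi)=\mathcal F_g(\varphi)\circ\alpha_C$ for all $g\colon B\to C$, $\varphi\in\Theta(g)$. Isomorphism means invertible 2-morphism. A $\Theta$-cokernel of $g\colon B\to C$ is a triple $(\mathcal C(g),\,c_g\colon C\to\mathcal C(g),\,\gamma_g\in\Theta(g\cdot c_g))$ such that for every $(D,\,h\colon C\to D,\,\varphi\in\Theta(g\cdot h))$ there is a unique $h'\colon\mathcal C(g)\to D$ with $c_g\cdot h'=h$ and $\gamma_g\circ h'=\varphi$. It is strong if for every $(D,\,h\colon\mathcal C(g)\to D,\,\varphi\in\Theta(c_g\cdot h))$ with $g\circ\varphi=\gamma_g\circ h$ there is a unique $\varphi'\in\Theta(h)$ with $c_g\circ\varphi'=\varphi$. A morphism sends $\Theta_\Delta$-cokernels to strong $\Theta$-cokernels if it maps each $\Theta_\Delta$-cokernel triple to a strong $\Theta$-cokernel triple of the image arrow. A colimit $\{i_D\colon\mathcal F D\to\mathrm{colim}\,\mathcal F\}_{D}$ of $\mathcal F\colon\mathcal D\to\mathcal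 B$ is $\Theta$-strong if for every object $X$ and every family $(\tau^a_D\colon\mathcal FD\to X,\ \tau^n_D\in\Theta(\tau^a_D))_{D\in\mathcal D}$ with $\mathcal F(g)\cdot\tau^a_{D'}=\tau^a_D$ and $\mathcal F(g)\circ\tau^n_{D'}=\tau^n_D$ for all $g\colon D\to D'$, there is a unique $t^n\in\Theta(t^a)$ with $i_D\circ t^n=\tau^n_D$ for all $D$, where $t^a$ is the induced arrow with $i_D\cdot t^a=\tau^a_D$. *)

From Stdlib Require Import List ProofIrrelevance.
Set Implicit Arguments.
Unset Strict Implicit.

Record Category := {
  Ob :> Type;
  Hom : Ob -> Ob -> Type;
  idm : forall X, Hom X X;
  comp : forall X Y Z, Hom X Y -> Hom Y Z -> Hom X Z;
  comp_id_l : forall X Y (f : Hom X Y), comp (idm X) f = f;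
  comp_id_r : forall X Y (f : Hom X Y), comp f (idm Y) = f;
  comp_assoc : forall W X Y Z (f : Hom W X) (g : Hom X Y) (h : Hom Y Z),
      comp (comp f g) h = comp f (comp g h)
}.
Arguments Hom {c} _ _.
Arguments idm {c} X.
Arguments comp {c X Y Z} _ _.
Notation "f ⋅ g" := (comp f g) (at level 40, left associativity).

Record Functor (C D : Category) := {
  fob :> Ob C -> Ob D;
  fmap : forall X Y, Hom X Y -> Hom (fob X) (fob Y);
  fmap_id : forall X, fmap (idm X) = idm (fob X);
  fmap_comp : forall X Y Z (f : Hom X Y) (g : Hom Y Z), fmap (f ⋅ g) = fmap f ⋅ fmap g
}.
Arguments fmap {C D} f0 {X Y} _.

Program Definition fcomp {C D E : Category} (F : Functor C D) (G : Functor D E) : Functor C E :=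
  {| fob := fun X => G (F X); fmap := fun X Y f => fmap G (fmap F f) |}.
Next Obligation. rewrite !fmap_id; reflexivity. Qed.
Next Obligation. rewrite !fmap_comp; reflexivity. Qed.

Unset Implicit Arguments.
Definition natural {C D : Category} (F G : Functor C D) (a : forall X, Hom (F X) (G X)) :=
  forall X Y (f : Hom X Y), fmap F f ⋅ a Y = a X ⋅ fmap G f.

Definition nat_iso {C D : Category} (F G : Functor C D) : Prop :=
  exists (a : forall X, Hom (F X) (G X)) (b : forall X, Hom (G X) (F X)),
    natural F G a /\ natural G F b /\
    (forall X, a X ⋅ b X = idm (F X)) /\ (forall X, b X ⋅ a X = idm (G X)).

(* ---------- Structures of nullhomotopies ----------
   Encoded fibrewise: NH X Y is the disjoint union over g : X -> Y of Theta(g);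
   bd phi is the arrow g with phi in Theta(g); wh f phi h is  f o phi o h. *)
Set Implicit Arguments.
Record NHStruct (C : Category) := {
  NH : Ob C -> Ob C -> Type;
  bd : forall X Y, NH X Y -> Hom X Y;
  wh : forall X0 X1 X2 X3, Hom X0 X1 -> NH X1 X2 -> Hom X2 X3 -> NH X0 X3;
  bd_wh : forall X0 X1 X2 X3 (f : Hom X0 X1) (p : NH X1 X2) (h : Hom X2 X3),
      bd (wh f p h) = f ⋅ bd p ⋅ h;
  wh_comp : forall X0' X0 X1 X2 X3 X3' (f' : Hom X0' X0) (f : Hom X0 X1) (p : NH X1 X2)
      (h : Hom X2 X3) (h' : Hom X3 X3'),
      wh (f' ⋅ f) p (h ⋅ h') = wh f' (wh f p h) h';
  wh_id : forall X Y (p : NH X Y), wh (idm X) p (idm Y) = p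
}.
Arguments NH {C} n _ _.
Arguments bd {C} n {X Y} _.
Arguments wh {C} n {X0 X1 X2 X3} _ _ _.

(* reduced interchange: alpha o g = f o beta, for alpha in Theta(f), beta in Theta(g) *)
Unset Implicit Arguments.
Definition reduced_interchange {C : Category} (T : NHStruct C) : Prop :=
  forall X Y Z (f : Hom X Y) (g : Hom Y Z) (a : NH T X Y) (b : NH T Y Z),
    bd T a = f -> bd T b = g -> wh T (idm X) a g = wh T f b (idm Z).

Set Implicit Arguments.
Record NHMorphism {C D : Category} (TC : NHStruct C) (TD : NHStruct D) := {
  nhF :> Functor C D;
  nhmap : forall X Y, NH TC X Y -> NH TD (nhF X) (nhF Y);
  nhmap_bd : forall X Y (p : NH TC X Y), bd TD (nhmap p) = fmap nhF (bd TC p);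
  nhmap_wh : forall X0 X1 X2 X3 (f : Hom X0 X1) (p : NH TC X1 X2) (h : Hom X2 X3),
      nhmap (wh TC f p h) = wh TD (fmap nhF f) (nhmap p) (fmap nhF h)
}.
Arguments nhF {C D TC TD} _.
Arguments nhmap {C D TC TD} _ {X Y} _.
Unset Implicit Arguments.

Definition two_morphism {C D : Category} {TC : NHStruct C} {TD : NHStruct D}
  (M N : NHMorphism TC TD) (a : forall X, Hom (nhF M X) (nhF N X)) : Prop :=
  natural (nhF M) (nhF N) a /\
  forall X Y (p : NH TC X Y), wh TD (a X) (nhmap N p) (idm _) = wh TD (idm _) (nhmap M p) (a Y).

Definition nh_iso {C D : Category} {TC : NHStruct C} {TD : NHStruct D}
  (M N : NHMorphism TC TD) : Prop :=
  exists (a : forall X, Hom (nhF M X) (nhF N X)) (b : forall X, Hom (nhF N X) (nhF M X)),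
    two_morphism M N a /\ two_morphism N M b /\
    (forall X, a X ⋅ b X = idm _) /\ (forall X, b X ⋅ a X = idm _).

Definition is_cokernel {C : Category} (T : NHStruct C) {X Y : C} (g : Hom X Y)
  (K : C) (c : Hom Y K) (gam : NH T X K) : Prop :=
  bd T gam = g ⋅ c /\
  forall Z (h : Hom Y Z) (p : NH T X Z), bd T p = g ⋅ h ->
    exists! h' : Hom K Z, c ⋅ h' = h /\ wh T (idm X) gam h' = p.

Definition is_strong_cokernel {C : Category} (T : NHStruct C) {X Y : C} (g : Hom X Y)
  (K : C) (c : Hom Y K) (gam : NH T X K) : Prop :=
  is_cokernel T g K c gam /\
  forall Z (h : Hom K Z) (p : NH T Y Z), bd T p = c ⋅ h ->
    wh T g p (idm Z) = wh T (idm X) gam h ->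
    exists! p' : NH T K Z, bd T p' = h /\ wh T c p' (idm Z) = p.

Definition has_strong_cokernel {C : Category} (T : NHStruct C) {X Y : C} (g : Hom X Y) : Prop :=
  exists (K : C) (c : Hom Y K) (gam : NH T X K), is_strong_cokernel T g K c gam.

Definition sends_cokernels_to_strong {C D : Category} {TC : NHStruct C} {TD : NHStruct D}
  (M : NHMorphism TC TD) : Prop :=
  forall X Y (g : Hom X Y) K (c : Hom Y K) (gam : NH TC X K),
    is_cokernel TC g K c gam ->
    is_strong_cokernel TD (fmap (nhF M) g) (nhF M K) (fmap (nhF M) c) (nhmap M gam).

Definition finite_cat (D : Category) : Prop :=
  (exists l : list (Ob D), forall d, In d l) /\
  (forall d d' : D, exists l : list (Hom d d'), forall g, In g l).

Definition is_cocone {D C : Category} (H : Functor D C) (X : C) (i : forall d, Hom (H d) X) :=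
  forall d d' (g : Hom d d'), fmap H g ⋅ i d' = i d.

Definition is_colimit {D C : Category} (H : Functor D C) (X : C) (i : forall d, Hom (H d) X) :=
  is_cocone H X i /\
  forall Y (t : forall d, Hom (H d) Y), is_cocone H Y t ->
    exists! u : Hom X Y, forall d, i d ⋅ u = t d.

Definition is_strong_colimit {D C : Category} (T : NHStruct C) (H : Functor D C) (X : C)
  (i : forall d, Hom (H d) X) : Prop :=
  forall Y (ta : forall d, Hom (H d) Y) (tn : forall d, NH T (H d) Y),
    (forall d, bd T (tn d) = ta d) ->
    (forall d d' (g : Hom d d'), fmap H g ⋅ ta d' = ta d) ->
    (forall d d' (g : Hom d d'), wh T (fmap H g) (tn d') (idm Y) = tn d) ->
    forall u : Hom X Y, (forall d, i d ⋅ u = ta d) ->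
      exists! un : NH T X Y, bd T un = u /\ forall d, wh T (i d) un (idm Y) = tn d.

Definition has_finite_colimits (C : Category) : Prop :=
  forall D : Category, finite_cat D -> forall H : Functor D C,
    exists (X : C) (i : forall d, Hom (H d) X), is_colimit H X i.

Definition preserves_finite_colimits_strong {C E : Category} (F : Functor C E)
  (T : NHStruct E) : Prop :=
  forall D : Category, finite_cat D -> forall (H : Functor D C) (X : C)
    (i : forall d, Hom (H d) X), is_colimit H X i ->
    is_colimit (fcomp H F) (F X) (fun d => fmap F (i d)) /\
    is_strong_colimit T (fcomp H F) (F X) (fun d => fmap F (i d)).

Record ArrOb (A : Category) := { a_src : Ob A; a_tgt : Ob A; a_arr : Hom a_src a_tgt }.
Arguments a_src {A}. Arguments a_tgt {A}. Arguments a_arr {A}.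

Record ArrHom {A : Category} (X Y : ArrOb A) := {
  ah_top : Hom (a_src X) (a_src Y);
  ah_bot : Hom (a_tgt X) (a_tgt Y);
  ah_sq : a_arr X ⋅ ah_bot = ah_top ⋅ a_arr Y }.
Arguments ah_top {A X Y}. Arguments ah_bot {A X Y}. Arguments ah_sq {A X Y}.

Lemma ArrHom_eq {A : Category} (X Y : ArrOb A) (u v : ArrHom X Y) :
  ah_top u = ah_top v -> ah_bot u = ah_bot v -> u = v.
Proof.
  destruct u as [t1 b1 s1], v as [t2 b2 s2]; simpl; intros -> ->.
  f_equal; apply proof_irrelevance.
Qed.

Program Definition arr_id {A : Category} (X : ArrOb A) : ArrHom X X :=
  {| ah_top := idm _; ah_bot := idm _ |}.
Next Obligation. rewrite comp_id_l, comp_id_r; reflexivity. Qed.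

Program Definition arr_comp {A : Category} (X Y Z : ArrOb A) (u : ArrHom X Y) (v : ArrHom Y Z)
  : ArrHom X Z := {| ah_top := ah_top u ⋅ ah_top v; ah_bot := ah_bot u ⋅ ah_bot v |}.
Next Obligation.
  rewrite <- comp_assoc, (ah_sq u), comp_assoc, (ah_sq v), comp_assoc; reflexivity.
Qed.

Program Definition Arr (A : Category) : Category :=
  {| Ob := ArrOb A; Hom := @ArrHom A; idm := @arr_id A; comp := @arr_comp A |}.
Next Obligation. apply ArrHom_eq; simpl; apply comp_id_l. Qed.
Next Obligation. apply ArrHom_eq; simpl; apply comp_id_r. Qed.
Next Obligation. apply ArrHom_eq; simpl; apply comp_assoc. Qed.

(* Theta_Delta(g,g0) = { phi : B0 -> C | b.phi = g, phi.c = g0 };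
   a nullhomotopy between X and Y is phi : tgt X -> src Y, with boundary (b.phi, phi.c). *)
Program Definition arr_bd {A : Category} (X Y : ArrOb A) (p : Hom (a_tgt X) (a_src Y))
  : ArrHom X Y := {| ah_top := a_arr X ⋅ p; ah_bot := p ⋅ a_arr Y |}.
Next Obligation. rewrite comp_assoc; reflexivity. Qed.

Program Definition ThetaDelta (A : Category) : NHStruct (Arr A) :=
  {| NH := fun X Y => Hom (a_tgt X) (a_src Y);
     bd := @arr_bd A;
     wh := fun X0 X1 X2 X3 f p h => ah_bot f ⋅ p ⋅ ah_top h |}.
Next Obligation.
  apply ArrHom_eq; simpl.
  - rewrite <- !comp_assoc, (ah_sq f); reflexivity.
  - rewrite !comp_assoc, (ah_sq h); reflexivity.
Qed.
Next Obligation. rewrite !comp_assoc; reflexivity. Qed.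
Next Obligation. rewrite comp_id_l, comp_id_r; reflexivity. Qed.

Definition is_initial {A : Category} (I0 : A) (init : forall X, Hom I0 X) : Prop :=
  forall X (f : Hom I0 X), f = init X.

Program Definition GammaF (A : Category) (I0 : A) (init : forall X : A, Hom I0 X)
  (Hinit : is_initial I0 init) : Functor A (Arr A) :=
  {| fob := fun X => {| a_src := I0; a_tgt := X; a_arr := init X |};
     fmap := fun X Y g0 => {| ah_top := idm I0; ah_bot := g0 |} |}.
Next Obligation. rewrite comp_id_l; rewrite (Hinit _ (init X ⋅ g0)); reflexivity. Qed.
Next Obligation. apply ArrHom_eq; reflexivity. Qed.
Next Obligation. apply ArrHom_eq; simpl; [rewrite comp_id_l|]; reflexivity. Qed.

(** The extension is forced: every object (B, b, B0) of Arr(A) is the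
    Theta_Delta-cokernel of Gamma b, so a morphism sending Theta_Delta-cokernels to
    strong cokernels must send it to a strong Theta-cokernel of F b.  Conversely,
    choosing such cokernels defines Fhat.  A Theta_Delta-cokernel of (g, g0) is, up to
    isomorphism, a pushout of b along g with the bottom arrow invertible, and finite
    colimits in Arr(A) are computed pointwise; since F preserves these colimits
    strongly, the universal properties of the chosen cokernels combine (using the
    reduced interchange to compare the two ways of whiskering) into those required
    of Fhat.  Finally F(emptyset) is a strong initial object of B, so the cokernel
    of F(emptyset -> X) is F X, which gives Gamma . Fhat ≅ F. *)

From Stdlib Require Import IndefiniteDescription ProofIrrelevance List.
Set Implicit Arguments.
Unset Strict Implicit.

Definition witness {T0 : Type} {P : T0 -> Prop} (H : exists x, P x) : {x | P x} :=
  constructive_indefinite_description P H.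

Definition unique_witness {T0 : Type} {P : T0 -> Prop} (H : exists! x, P x) : {x | P x} :=
  witness (match H with ex_intro _ x (conj Hx _) => ex_intro P x Hx end).

Lemma comp_square_r {C : Category} {W X Y Z : C} (a : Hom W X) (b : Hom X Z) (c : Hom W Y)
  (d : Hom Y Z) : a ⋅ b = c ⋅ d -> forall V (k : Hom Z V), a ⋅ (b ⋅ k) = c ⋅ (d ⋅ k).
Proof. intros E V k; rewrite <- !comp_assoc, E; reflexivity. Qed.

Lemma natural_comp {C D : Category} {F G H : Functor C D} (a : forall X, Hom (F X) (G X))
  (b : forall X, Hom (G X) (H X)) :
  natural F G a -> natural G H b -> natural F H (fun X => a X ⋅ b X).
Proof. intros Na Nb X Y f. rewrite <- comp_assoc, Na, comp_assoc, Nb, comp_assoc; reflexivity. Qed.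

Lemma iso_comp_inv {C : Category} {X Y Z : C} (a : Hom X Y) (a' : Hom Y X) (b : Hom Y Z)
  (b' : Hom Z Y) : a ⋅ a' = idm X -> b ⋅ b' = idm Y -> a ⋅ b ⋅ (b' ⋅ a') = idm X.
Proof.
  intros Ha Hb. rewrite comp_assoc, <- (comp_assoc b), Hb, comp_id_l, Ha; reflexivity.
Qed.

Section Whiskering.
Variables (C : Category) (T : NHStruct C).

Lemma wh_wh X0' X0 X1 X2 X3 X3' (f' : Hom X0' X0) (f : Hom X0 X1) (p : NH T X1 X2)
  (h : Hom X2 X3) (h' : Hom X3 X3') :
  wh T f' (wh T f p h) h' = wh T (f' ⋅ f) p (h ⋅ h').
Proof. symmetry; apply wh_comp. Qed.

Lemma wh_comp_l X0 X1 X2 X3 Z (f : Hom X0 X1) (f' : Hom X1 X2) (p : NH T X2 X3) (h : Hom X3 Z) :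
  wh T (f ⋅ f') p h = wh T f (wh T f' p h) (idm Z).
Proof. rewrite wh_wh, comp_id_r; reflexivity. Qed.

Lemma wh_inner_r X0 X1 X2 X3 (f : Hom X0 X1) (p : NH T X1 X2) (h : Hom X2 X3) :
  wh T f p h = wh T f (wh T (idm _) p h) (idm _).
Proof. rewrite wh_wh, !comp_id_r; reflexivity. Qed.

Section ExtendEquation.
Variables (X1 X2 X3 Y1 : C) (p : NH T X1 X2) (h : Hom X2 X3) (f' : Hom X1 Y1) (q : NH T Y1 X3).
Hypothesis (E : wh T (idm _) p h = wh T f' q (idm _)).

Lemma wh_extend_eq W Z (f : Hom W X1) (k : Hom X3 Z) : wh T f p (h ⋅ k) = wh T (f ⋅ f') q k.
Proof. rewrite <- (comp_id_r f) at 1. rewrite <- wh_wh, E, wh_wh, comp_id_l; reflexivity. Qed.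

Lemma wh_extend_eq_l W (f : Hom W X1) : wh T f p h = wh T (f ⋅ f') q (idm _).
Proof. rewrite <- (comp_id_r h), wh_extend_eq; reflexivity. Qed.
End ExtendEquation.

Section PrecompEquation.
Variables (X1 X2 X3 Y1 : C) (p : NH T X2 X3) (g : Hom X1 X2) (g' : Hom X1 Y1) (q : NH T Y1 X3).
Hypothesis (E : wh T g p (idm _) = wh T g' q (idm _)).

Lemma wh_precomp_eq W Z (f : Hom W X1) (k : Hom X3 Z) : wh T (f ⋅ g) p k = wh T (f ⋅ g') q k.
Proof. rewrite <- (comp_id_l k), <- !wh_wh, E; reflexivity. Qed.

Lemma wh_postcomp_eq Z (k : Hom X3 Z) : wh T g p k = wh T g' q k.
Proof. rewrite <- (comp_id_l g), <- (comp_id_l g'), wh_precomp_eq; reflexivity. Qed.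
End PrecompEquation.
End Whiskering.

Ltac wh_norm := repeat (rewrite ?wh_wh, ?comp_id_l, ?comp_id_r, ?comp_assoc, ?wh_id).

Section Cokernels.
Variables (C : Category) (T : NHStruct C) (X Y K : C) (g : Hom X Y) (c : Hom Y K) (gam : NH T X K).

Lemma cokernel_bd : is_cokernel T g K c gam -> bd T gam = g ⋅ c.
Proof. intros [H _]; exact H. Qed.

Lemma cokernel_hom_ext : is_cokernel T g K c gam -> forall Z (h1 h2 : Hom K Z),
  c ⋅ h1 = c ⋅ h2 -> wh T (idm X) gam h1 = wh T (idm X) gam h2 -> h1 = h2.
Proof.
  intros [Hb Hu] Z h1 h2 E1 E2.
  destruct (Hu Z (c ⋅ h2) (wh T (idm X) gam h2)) as [h' [_ Hh']].
  - rewrite bd_wh, Hb, comp_id_l, comp_assoc; reflexivity.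
  - rewrite <- (Hh' h1), <- (Hh' h2); auto.
Qed.

Definition cokernel_factor (H : is_cokernel T g K c gam) Z (h : Hom Y Z) (p : NH T X Z)
  (Hp : bd T p = g ⋅ h) : {h' : Hom K Z | c ⋅ h' = h /\ wh T (idm X) gam h' = p} :=
  unique_witness (proj2 H Z h p Hp).

Lemma strong_cokernel_cokernel : is_strong_cokernel T g K c gam -> is_cokernel T g K c gam.
Proof. intros [H _]; exact H. Qed.

Definition strong_cokernel_lift (H : is_strong_cokernel T g K c gam) Z (h : Hom K Z)
  (p : NH T Y Z) (Hp : bd T p = c ⋅ h) (Hq : wh T g p (idm Z) = wh T (idm X) gam h) :
  {p' : NH T K Z | bd T p' = h /\ wh T c p' (idm Z) = p} :=
  unique_witness (proj2 H Z h p Hp Hq).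

(* The reduced interchange shows that [wh c p'] always satisfies the compatibility
   condition of the strong cokernel, so [p'] is determined by it. *)
Lemma strong_cokernel_nh_ext : reduced_interchange T -> is_strong_cokernel T g K c gam ->
  forall Z (h : Hom K Z) (p1 p2 : NH T K Z), bd T p1 = h -> bd T p2 = h ->
  wh T c p1 (idm Z) = wh T c p2 (idm Z) -> p1 = p2.
Proof.
  intros RI [Hc Hs] Z h p1 p2 B1 B2 E.
  destruct (Hs Z h (wh T c p1 (idm Z))) as [p' [_ Hp']].
  - rewrite bd_wh, B1, comp_id_r; reflexivity.
  - rewrite wh_wh, comp_id_l. symmetry; apply RI; auto. apply (cokernel_bd Hc).
  - rewrite <- (Hp' p1), <- (Hp' p2); auto.
Qed.
End Cokernels.

Lemma cokernel_unique_iso {C : Category} (T : NHStruct C) {X Y K K' : C} (g : Hom X Y)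
  (c : Hom Y K) (gam : NH T X K) (c' : Hom Y K') (gam' : NH T X K') :
  is_cokernel T g K c gam -> is_cokernel T g K' c' gam' ->
  exists (m : Hom K K') (n : Hom K' K),
    c ⋅ m = c' /\ c' ⋅ n = c /\ wh T (idm X) gam' n = gam /\ m ⋅ n = idm K /\ n ⋅ m = idm K'.
Proof.
  intros HK HK'.
  destruct (cokernel_factor HK (cokernel_bd HK')) as [m [M1 M2]].
  destruct (cokernel_factor HK' (cokernel_bd HK)) as [n [N1 N2]].
  exists m, n; repeat split; auto.
  - apply (cokernel_hom_ext HK).
    + rewrite <- comp_assoc, M1, N1, comp_id_r; reflexivity.
    + rewrite <- (comp_id_l (idm X)) at 1. rewrite wh_comp, M2, N2, wh_id; reflexivity.
  - apply (cokernel_hom_ext HK').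
    + rewrite <- comp_assoc, N1, M1, comp_id_r; reflexivity.
    + rewrite <- (comp_id_l (idm X)) at 1. rewrite wh_comp, N2, M2, wh_id; reflexivity.
Qed.

Section Colimits.
Variables (D C : Category) (T : NHStruct C) (H : Functor D C) (X : C) (i : forall d, Hom (H d) X).

Lemma colimit_hom_ext : is_colimit H X i -> forall Y (u1 u2 : Hom X Y),
  (forall d, i d ⋅ u1 = i d ⋅ u2) -> u1 = u2.
Proof.
  intros [Hc Hu] Y u1 u2 E.
  destruct (Hu Y (fun d => i d ⋅ u2)) as [u [_ Hu']].
  - intros d d' f. rewrite <- comp_assoc, Hc; reflexivity.
  - rewrite <- (Hu' u1), <- (Hu' u2); auto.
Qed.

Definition colimit_factor (Hc : is_colimit H X i) Y (t : forall d, Hom (H d) Y)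
  (Ht : is_cocone H Y t) : {u : Hom X Y | forall d, i d ⋅ u = t d} :=
  unique_witness (proj2 Hc Y t Ht).

Lemma strong_colimit_nh_ext : is_colimit H X i -> is_strong_colimit T H X i ->
  forall Y (n1 n2 : NH T X Y), bd T n1 = bd T n2 ->
  (forall d, wh T (i d) n1 (idm Y) = wh T (i d) n2 (idm Y)) -> n1 = n2.
Proof.
  intros [Hc _] Hs Y n1 n2 B E.
  destruct (Hs Y (fun d => i d ⋅ bd T n1) (fun d => wh T (i d) n1 (idm Y))) with (u := bd T n1)
    as [un [_ Hun]]; auto.
  - intros d; rewrite bd_wh, comp_id_r; reflexivity.
  - intros d d' f; rewrite <- comp_assoc, Hc; reflexivity.
  - intros d d' f; rewrite wh_wh, comp_id_l, Hc; reflexivity.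
  - rewrite <- (Hun n1), <- (Hun n2); auto.
Qed.

Definition strong_colimit_lift (Hs : is_strong_colimit T H X i) Y (ta : forall d, Hom (H d) Y)
  (tn : forall d, NH T (H d) Y) (H1 : forall d, bd T (tn d) = ta d)
  (H2 : forall d d' (g : Hom d d'), fmap H g ⋅ ta d' = ta d)
  (H3 : forall d d' (g : Hom d d'), wh T (fmap H g) (tn d') (idm Y) = tn d)
  (u : Hom X Y) (Hu : forall d, i d ⋅ u = ta d) :
  {un : NH T X Y | bd T un = u /\ forall d, wh T (i d) un (idm Y) = tn d} :=
  unique_witness (Hs Y ta tn H1 H2 H3 u Hu).

Lemma colimit_transport : is_colimit H X i -> forall X' (e : Hom X X') (f : Hom X' X)
  (i' : forall d, Hom (H d) X'), e ⋅ f = idm X -> f ⋅ e = idm X' ->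
  (forall d, i d ⋅ e = i' d) -> is_colimit H X' i'.
Proof.
  intros [Hc Hu] X' e f i' E1 E2 Ei. split.
  - intros d d' g. rewrite <- !Ei, <- comp_assoc, Hc; reflexivity.
  - intros Y t Ht. destruct (Hu Y t Ht) as [u [Hu1 Hu2]].
    exists (f ⋅ u). split.
    + intros d. rewrite <- Ei, comp_assoc, <- (comp_assoc e), E1, comp_id_l; auto.
    + intros v Hv. rewrite (Hu2 (e ⋅ v)).
      * rewrite <- comp_assoc, E2, comp_id_l; reflexivity.
      * intros d; rewrite <- comp_assoc, Ei; auto.
Qed.
End Colimits.

Inductive SpanOb := sp_apex | sp_left | sp_right.
Definition span_le (a b : SpanOb) : bool :=
  match a, b with
  | sp_apex, _ | sp_left, sp_left | sp_right, sp_right => true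
  | _, _ => false
  end.
Lemma span_le_refl a : span_le a a = true. Proof. destruct a; reflexivity. Qed.
Lemma span_le_trans a b c : span_le a b = true -> span_le b c = true -> span_le a c = true.
Proof. destruct a, b, c; simpl; auto. Qed.

Program Definition SpanCat : Category :=
  {| Ob := SpanOb; Hom := fun a b => span_le a b = true;
     idm := span_le_refl; comp := span_le_trans |}.
Next Obligation. apply proof_irrelevance. Qed.
Next Obligation. apply proof_irrelevance. Qed.
Next Obligation. apply proof_irrelevance. Qed.

Lemma SpanCat_finite : finite_cat SpanCat.
Proof.
  split.
  - exists (sp_apex :: sp_left :: sp_right :: nil). intros d; destruct d; simpl; auto.
  - intros d d'. simpl.
    exists (match span_le d d' as b return list (b = true) with
            | true => eq_refl :: nil | false => nil end).
    destruct (span_le d d'); intros g.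
    + left; apply proof_irrelevance.
    + discriminate.
Qed.

Section Span.
Variables (A : Category) (X1 X0 Y1 : A) (x : Hom X1 X0) (g : Hom X1 Y1).
Definition span_ob (s : SpanOb) : A :=
  match s with sp_apex => X1 | sp_left => X0 | sp_right => Y1 end.
Definition span_map (a b : SpanOb) : span_le a b = true -> Hom (span_ob a) (span_ob b) :=
  match a as a', b as b' return span_le a' b' = true -> Hom (span_ob a') (span_ob b') with
  | sp_apex, sp_apex => fun _ => idm _
  | sp_apex, sp_left => fun _ => x
  | sp_apex, sp_right => fun _ => g
  | sp_left, sp_left => fun _ => idm _
  | sp_right, sp_right => fun _ => idm _
  | sp_left, sp_apex => fun e => False_rect _ (Bool.diff_false_true e)
  | sp_left, sp_right => fun e => False_rect _ (Bool.diff_false_true e)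
  | sp_right, sp_apex => fun e => False_rect _ (Bool.diff_false_true e)
  | sp_right, sp_left => fun e => False_rect _ (Bool.diff_false_true e)
  end.
Program Definition span_diagram : Functor SpanCat A := {| fob := span_ob; fmap := span_map |}.
Next Obligation. destruct X; reflexivity. Qed.
Next Obligation.
  destruct X, Y, Z; simpl in *; try discriminate; simpl; rewrite ?comp_id_l, ?comp_id_r; reflexivity.
Qed.

Definition is_pushout (P : A) (u : Hom X0 P) (v : Hom Y1 P) : Prop :=
  x ⋅ u = g ⋅ v /\ forall W (a : Hom X0 W) (b : Hom Y1 W), x ⋅ a = g ⋅ b ->
    exists! w : Hom P W, u ⋅ w = a /\ v ⋅ w = b.

Definition span_cocone {P : A} (u : Hom X0 P) (v : Hom Y1 P) (s : SpanOb) : Hom (span_ob s) P :=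
  match s as s' return Hom (span_ob s') P with sp_apex => x ⋅ u | sp_left => u | sp_right => v end.

Lemma span_cocone_is_cocone P (u : Hom X0 P) (v : Hom Y1 P) :
  x ⋅ u = g ⋅ v -> is_cocone span_diagram P (span_cocone u v).
Proof.
  intros E d d' e; destruct d, d'; simpl in *; try discriminate; simpl;
    rewrite ?comp_id_l; auto.
Qed.

Lemma pushout_colimit P u v : is_pushout u v -> is_colimit span_diagram P (span_cocone u v).
Proof.
  intros [E Hu]. split; [apply span_cocone_is_cocone; auto|].
  intros W t Ht.
  assert (E1 : x ⋅ t sp_left = g ⋅ t sp_right).
  { pose proof (Ht sp_apex sp_left eq_refl) as H1; pose proof (Ht sp_apex sp_right eq_refl) as H2.
    simpl in H1, H2; rewrite H1, H2; reflexivity. }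
  destruct (Hu W (t sp_left) (t sp_right) E1) as [w [[W1 W2] Hw]].
  exists w; split.
  - intros d; destruct d; simpl; auto. rewrite comp_assoc, W1. apply (Ht sp_apex sp_left eq_refl).
  - intros w' Hw'. apply Hw. split; [apply (Hw' sp_left)|apply (Hw' sp_right)].
Qed.

Lemma colimit_pushout P (i : forall s, Hom (span_diagram s) P) : is_colimit span_diagram P i ->
  is_pushout (i sp_left) (i sp_right).
Proof.
  intros Hc. pose proof (proj1 Hc) as Hco.
  pose proof (Hco sp_apex sp_left eq_refl) as H1; pose proof (Hco sp_apex sp_right eq_refl) as H2.
  simpl in H1, H2.
  split.
  - rewrite H1, H2; reflexivity.
  - intros W a b E.
    destruct (proj2 Hc W (span_cocone a b) (span_cocone_is_cocone E)) as [w [Hw1 Hw2]].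
    exists w. split.
    + split; [apply (Hw1 sp_left)|apply (Hw1 sp_right)].
    + intros w' [W1 W2]. apply Hw2. intros d; destruct d; simpl; auto.
      rewrite <- W1, <- comp_assoc, H1; reflexivity.
Qed.

Lemma pushout_transport P u v : is_pushout u v -> forall P' (e : Hom P P') (f : Hom P' P),
  e ⋅ f = idm P -> f ⋅ e = idm P' -> is_pushout (u ⋅ e) (v ⋅ e).
Proof.
  intros H P' e f E1 E2.
  assert (HC : is_colimit span_diagram P' (span_cocone (u ⋅ e) (v ⋅ e))).
  { apply (colimit_transport (pushout_colimit H) E1 E2).
    intros d; destruct d; simpl; rewrite ?comp_assoc; reflexivity. }
  exact (colimit_pushout HC).
Qed.
Lemma pushout_factor P (u : Hom X0 P) (v : Hom Y1 P) (HP : is_pushout u v) W (a : Hom X0 W)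
  (b : Hom Y1 W) (E : x ⋅ a = g ⋅ b) : {w : Hom P W | u ⋅ w = a /\ v ⋅ w = b}.
Proof. exact (unique_witness (proj2 HP W a b E)). Qed.

Lemma pushout_hom_ext P (u : Hom X0 P) (v : Hom Y1 P) (HP : is_pushout u v) W (w1 w2 : Hom P W) :
  u ⋅ w1 = u ⋅ w2 -> v ⋅ w1 = v ⋅ w2 -> w1 = w2.
Proof.
  intros E1 E2. destruct (proj2 HP W (u ⋅ w2) (v ⋅ w2)) as [w [_ Hw]].
  - rewrite <- !comp_assoc, (proj1 HP); reflexivity.
  - rewrite <- (Hw w1), <- (Hw w2); auto.
Qed.
End Span.

Lemma pushout_exists (A : Category) (HA : has_finite_colimits A) {X1 X0 Y1 : A} (x : Hom X1 X0)
  (g : Hom X1 Y1) : {P : A & {u : Hom X0 P & {v : Hom Y1 P | is_pushout x g u v}}}.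
Proof.
  destruct (witness (HA _ SpanCat_finite (span_diagram x g))) as [P HP].
  destruct (witness HP) as [i Hi].
  exists P, (i sp_left), (i sp_right). exact (colimit_pushout Hi).
Qed.

Program Definition EmptyCat : Category :=
  {| Ob := Empty_set; Hom := fun _ _ => unit; idm := fun _ => tt; comp := fun _ _ _ _ _ => tt |}.
Next Obligation. destruct f; reflexivity. Qed.
Next Obligation. destruct f; reflexivity. Qed.

Lemma EmptyCat_finite : finite_cat EmptyCat.
Proof. split; [exists nil; intros []|intros []]. Qed.

Program Definition empty_diagram (A : Category) : Functor EmptyCat A :=
  {| fob := fun e => match e with end; fmap := fun e _ _ => match e with end |}.
Next Obligation. destruct X. Qed.
Next Obligation. destruct X. Qed.

Section ArrowCokernels.
Variable (A : Category).

Section PushoutCokernel.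
Variables (X Y : ArrOb A) (g : ArrHom X Y) (P : A) (u : Hom (a_tgt X) P) (v : Hom (a_src Y) P)
  (k : Hom P (a_tgt Y)).
Hypotheses (HP : is_pushout (a_arr X) (ah_top g) u v)
  (Hku : u ⋅ k = ah_bot g) (Hkv : v ⋅ k = a_arr Y).

Definition pushout_arr : ArrOb A := {| a_src := P; a_tgt := a_tgt Y; a_arr := k |}.

Lemma pushout_arr_sq : a_arr Y ⋅ idm _ = v ⋅ a_arr pushout_arr.
Proof. simpl; rewrite comp_id_r, Hkv; reflexivity. Qed.

Definition pushout_arr_c : ArrHom Y pushout_arr :=
  @Build_ArrHom A Y pushout_arr v (idm _) pushout_arr_sq.

Lemma pushout_arr_cokernel :
  is_cokernel (ThetaDelta A) (g : Hom (c:=Arr A) X Y) pushout_arr pushout_arr_c u.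
Proof.
  split.
  - apply ArrHom_eq; simpl; [apply (proj1 HP)|rewrite comp_id_r; auto].
  - intros Z h p Hp.
    assert (P1 : a_arr X ⋅ p = ah_top g ⋅ ah_top h) by exact (f_equal ah_top Hp).
    assert (P2 : p ⋅ a_arr Z = ah_bot g ⋅ ah_bot h) by exact (f_equal ah_bot Hp).
    destruct (pushout_factor HP P1) as [w [W1 W2]].
    assert (Sq : a_arr pushout_arr ⋅ ah_bot h = w ⋅ a_arr Z).
    { simpl. apply (pushout_hom_ext HP).
      - rewrite <- comp_assoc, Hku, <- comp_assoc, W1, P2; reflexivity.
      - rewrite <- comp_assoc, Hkv, <- comp_assoc, W2, ah_sq; reflexivity. }
    exists (@Build_ArrHom A pushout_arr Z w (ah_bot h) Sq). split.
    + split.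
      * apply ArrHom_eq; simpl; [auto|apply comp_id_l].
      * simpl. rewrite comp_id_l; auto.
    + intros h' [H1 H2]. apply ArrHom_eq; simpl.
      * apply (pushout_hom_ext HP).
        -- rewrite W1, <- H2; simpl; rewrite comp_id_l; reflexivity.
        -- rewrite W2, <- H1; reflexivity.
      * rewrite <- H1; simpl; rewrite comp_id_l; reflexivity.
Qed.
End PushoutCokernel.

Lemma arr_cokernel_pushout (HA : has_finite_colimits A) {X Y K : ArrOb A} (g : ArrHom X Y)
  (c : ArrHom Y K) (gam : Hom (a_tgt X) (a_src K)) :
  is_cokernel (ThetaDelta A) (g : Hom (c:=Arr A) X Y) K c gam ->
  is_pushout (a_arr X) (ah_top g) gam (ah_top c) /\
  exists m0 : Hom (a_tgt K) (a_tgt Y), ah_bot c ⋅ m0 = idm _ /\ m0 ⋅ ah_bot c = idm _.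
Proof.
  intros HK.
  destruct (pushout_exists HA (a_arr X) (ah_top g)) as [P [u [v HP]]].
  destruct (pushout_factor HP (ah_sq g)) as [k [Hku Hkv]].
  destruct (cokernel_unique_iso HK (pushout_arr_cokernel HP Hku Hkv))
    as [m [n [M1 [N1 [N2 [MN NM]]]]]].
  split.
  - assert (E1 : u ⋅ ah_top n = gam) by (rewrite <- N2; simpl; rewrite comp_id_l; reflexivity).
    assert (E2 : v ⋅ ah_top n = ah_top c) by (rewrite <- N1; reflexivity).
    rewrite <- E1, <- E2. apply (pushout_transport HP (e := ah_top n) (f := ah_top m)).
    + exact (f_equal ah_top NM).
    + exact (f_equal ah_top MN).
  - exists (ah_bot m). split.
    + exact (f_equal ah_bot M1).
    + assert (E3 : ah_bot n = ah_bot c) by (rewrite <- N1; simpl; rewrite comp_id_l; reflexivity).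
      rewrite <- E3. exact (f_equal ah_bot MN).
Qed.
End ArrowCokernels.

Program Definition arr_src (A : Category) : Functor (Arr A) A :=
  {| fob := a_src; fmap := fun X Y u => ah_top u |}.
Program Definition arr_tgt (A : Category) : Functor (Arr A) A :=
  {| fob := a_tgt; fmap := fun X Y u => ah_bot u |}.

Section ArrowColimits.
Variables (A D : Category) (H : Functor D (Arr A)) (P1 P0 : A)
  (j1 : forall d, Hom (a_src (H d)) P1) (j0 : forall d, Hom (a_tgt (H d)) P0).
Hypotheses (Hj1 : is_colimit (fcomp H (arr_src A)) P1 j1)
  (Hj0 : is_colimit (fcomp H (arr_tgt A)) P0 j0).

Lemma pointwise_arr_spec : {p : Hom P1 P0 | forall d, j1 d ⋅ p = a_arr (H d) ⋅ j0 d}.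
Proof.
  apply (colimit_factor Hj1).
  intros d d' e. simpl. rewrite <- comp_assoc, <- (ah_sq (fmap H e)), comp_assoc.
  f_equal. apply (proj1 Hj0 d d' e).
Qed.

Definition pointwise_arr : ArrOb A :=
  {| a_src := P1; a_tgt := P0; a_arr := proj1_sig pointwise_arr_spec |}.

Definition pointwise_arr_leg (d : D) : ArrHom (H d) pointwise_arr :=
  @Build_ArrHom A (H d) pointwise_arr (j1 d) (j0 d) (eq_sym (proj2_sig pointwise_arr_spec d)).

Lemma pointwise_arr_cocone : is_cocone H pointwise_arr pointwise_arr_leg.
Proof. intros d d' e. apply ArrHom_eq; [apply (proj1 Hj1 d d' e)|apply (proj1 Hj0 d d' e)]. Qed.

(* X is a retract of the pointwise cocone, and the retraction is invertible on components
   because those of [pointwise_arr] are colimits. *)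
Lemma colimit_pointwise (X : ArrOb A) (i : forall d, Hom (H d) X) : is_colimit H X i ->
  is_colimit (fcomp H (arr_src A)) (a_src X) (fun d => ah_top (i d)) /\
  is_colimit (fcomp H (arr_tgt A)) (a_tgt X) (fun d => ah_bot (i d)).
Proof.
  intros Hi.
  destruct (colimit_factor Hi pointwise_arr_cocone) as [m Hm].
  destruct (colimit_factor Hj1 (t := fun d => ah_top (i d))) as [n1 Hn1];
    [intros d d' e; exact (f_equal ah_top (proj1 Hi d d' e))|].
  destruct (colimit_factor Hj0 (t := fun d => ah_bot (i d))) as [n0 Hn0];
    [intros d d' e; exact (f_equal ah_bot (proj1 Hi d d' e))|].
  simpl in Hn1, Hn0.
  assert (Sq : a_arr pointwise_arr ⋅ n0 = n1 ⋅ a_arr X).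
  { apply (colimit_hom_ext Hj1). intros d. simpl.
    rewrite <- comp_assoc, (proj2_sig pointwise_arr_spec), comp_assoc, (Hn0 d), <- comp_assoc,
      (Hn1 d), ah_sq; reflexivity. }
  set (n := @Build_ArrHom A pointwise_arr X n1 n0 Sq).
  assert (MN : (m ⋅ n : Hom (c:=Arr A) X X) = idm (c:=Arr A) X).
  { apply (colimit_hom_ext Hi). intros d. rewrite <- comp_assoc, Hm, comp_id_r.
    apply ArrHom_eq; simpl; auto. }
  split.
  - apply (colimit_transport Hj1 (e := n1) (f := ah_top m)); auto.
    + apply (colimit_hom_ext Hj1). intros d. simpl. rewrite <- comp_assoc, Hn1, comp_id_r.
      exact (f_equal ah_top (Hm d)).
    + exact (f_equal ah_top MN).
  - apply (colimit_transport Hj0 (e := n0) (f := ah_bot m)); auto.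
    + apply (colimit_hom_ext Hj0). intros d. simpl. rewrite <- comp_assoc, Hn0, comp_id_r.
      exact (f_equal ah_bot (Hm d)).
    + exact (f_equal ah_bot MN).
Qed.
End ArrowColimits.

Lemma arr_colimit_pointwise (A : Category) (HA : has_finite_colimits A) (D : Category)
  (HD : finite_cat D) (H : Functor D (Arr A)) (X : ArrOb A) (i : forall d, Hom (H d) X) :
  is_colimit H X i ->
  is_colimit (fcomp H (arr_src A)) (a_src X) (fun d => ah_top (i d)) /\
  is_colimit (fcomp H (arr_tgt A)) (a_tgt X) (fun d => ah_bot (i d)).
Proof.
  destruct (witness (HA D HD (fcomp H (arr_src A)))) as [P1 HP1].
  destruct (witness HP1) as [j1 Hj1].
  destruct (witness (HA D HD (fcomp H (arr_tgt A)))) as [P0 HP0].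
  destruct (witness HP0) as [j0 Hj0].
  exact (colimit_pointwise Hj1 Hj0 (i := i)).
Qed.

Section Extension.
Variables (A B : Category) (T : NHStruct B) (HRI : reduced_interchange T) (F : Functor A B)
  (Ha : preserves_finite_colimits_strong F T).

Section PushoutImage.
Variables (X1 X0 Y1 P : A) (x : Hom X1 X0) (g : Hom X1 Y1) (u : Hom X0 P) (v : Hom Y1 P)
  (HP : is_pushout x g u v).

Lemma F_pushout_strong :
  is_colimit (fcomp (span_diagram x g) F) (F P) (fun d => fmap F (span_cocone x u v d)) /\
  is_strong_colimit T (fcomp (span_diagram x g) F) (F P) (fun d => fmap F (span_cocone x u v d)).
Proof. exact (Ha SpanCat_finite (pushout_colimit HP)). Qed.

Lemma F_pushout_nh_ext Z (n1 n2 : NH T (F P) Z) : bd T n1 = bd T n2 ->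
  wh T (fmap F u) n1 (idm Z) = wh T (fmap F u) n2 (idm Z) ->
  wh T (fmap F v) n1 (idm Z) = wh T (fmap F v) n2 (idm Z) -> n1 = n2.
Proof.
  intros E0 E1 E2.
  apply (strong_colimit_nh_ext (proj1 F_pushout_strong) (proj2 F_pushout_strong)); auto.
  intros d; destruct d; simpl; auto.
  rewrite fmap_comp, !wh_comp_l, E1; reflexivity.
Qed.

Lemma F_pushout_nh_lift Z (w : Hom (F P) Z) (qa : NH T (F X0) Z) (qb : NH T (F Y1) Z)
  (Ea : bd T qa = fmap F u ⋅ w) (Eb : bd T qb = fmap F v ⋅ w)
  (Ec : wh T (fmap F x) qa (idm Z) = wh T (fmap F g) qb (idm Z)) :
  {n : NH T (F P) Z |
    bd T n = w /\ wh T (fmap F u) n (idm Z) = qa /\ wh T (fmap F v) n (idm Z) = qb}.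
Proof.
  pose proof (proj1 HP) as Hxg.
  destruct (strong_colimit_lift (proj2 F_pushout_strong)
    (ta := fun d => fmap F (span_cocone x u v d) ⋅ w)
    (tn := fun d => match d as d' return NH T (F (span_ob X1 X0 Y1 d')) Z with
                    | sp_apex => wh T (fmap F x) qa (idm Z) | sp_left => qa | sp_right => qb end))
    with (u := w) as [n [Hn1 Hn2]].
  - intros d; destruct d; simpl; auto. rewrite bd_wh, Ea, fmap_comp; wh_norm; reflexivity.
  - intros d d' e; destruct d, d'; simpl in *; try discriminate; simpl;
      rewrite ?fmap_id, ?comp_id_l, <- ?comp_assoc, <- ?fmap_comp; auto.
    rewrite Hxg; reflexivity.
  - intros d d' e; destruct d, d'; simpl in *; try discriminate; simpl;
      rewrite ?fmap_id, ?wh_id; auto.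
  - intros d; reflexivity.
  - exists n; split; auto. split; [apply (Hn2 sp_left)|apply (Hn2 sp_right)].
Qed.
End PushoutImage.

Section InitialImage.
Variables (I0 : A) (init : forall X : A, Hom I0 X) (Hinit : is_initial I0 init).

Definition empty_cocone (X : A) : forall d : EmptyCat, Hom (empty_diagram A d) X :=
  fun d => match d as d' return Hom (empty_diagram A d') X with end.

Lemma initial_colimit : is_colimit (empty_diagram A) I0 (empty_cocone I0).
Proof.
  split; [intros []|]. intros Y t _. exists (init Y). split; [intros []|].
  intros u _; symmetry; apply Hinit.
Qed.

Lemma F_initial_strong :
  is_colimit (fcomp (empty_diagram A) F) (F I0) (fun d => fmap F (empty_cocone I0 d)) /\
  is_strong_colimit T (fcomp (empty_diagram A) F) (F I0) (fun d => fmap F (empty_cocone I0 d)).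
Proof. exact (Ha EmptyCat_finite initial_colimit). Qed.

Lemma F_initial_hom_ext Y (u1 u2 : Hom (F I0) Y) : u1 = u2.
Proof. apply (colimit_hom_ext (proj1 F_initial_strong)); intros []. Qed.

Lemma F_initial_nh_ext Y (n1 n2 : NH T (F I0) Y) : n1 = n2.
Proof.
  apply (strong_colimit_nh_ext (proj1 F_initial_strong) (proj2 F_initial_strong));
    [apply F_initial_hom_ext | intros []].
Qed.

Lemma F_initial_nh Y (u : Hom (F I0) Y) : {n : NH T (F I0) Y | bd T n = u}.
Proof.
  destruct (strong_colimit_lift (proj2 F_initial_strong)
    (ta := fun d : EmptyCat => match d return Hom (fcomp (empty_diagram A) F d) Y with end)
    (tn := fun d : EmptyCat => match d return NH T (fcomp (empty_diagram A) F d) Y with end))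
    with (u := u) as [n [Hn _]]; try (intros []); eauto.
Qed.
End InitialImage.

Lemma F_ah_sq {X Y : ArrOb A} (u : ArrHom X Y) :
  fmap F (ah_top u) ⋅ fmap F (a_arr Y) = fmap F (a_arr X) ⋅ fmap F (ah_bot u).
Proof. rewrite <- !fmap_comp, ah_sq; reflexivity. Qed.

Variable (Hb : forall (X Y : A) (a : Hom X Y), has_strong_cokernel T (fmap F a)).

Lemma Fhat_cokernel_data (X : ArrOb A) : {K : B & {c : Hom (F (a_tgt X)) K &
  {gam : NH T (F (a_src X)) K | is_strong_cokernel T (fmap F (a_arr X)) K c gam}}}.
Proof.
  destruct (witness (Hb (a_arr X))) as [K HK]. exists K.
  destruct (witness HK) as [c Hc]. exists c.
  destruct (witness Hc) as [gam Hg]. exists gam; exact Hg.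
Qed.

Definition Fhat_ob (X : ArrOb A) : B := projT1 (Fhat_cokernel_data X).
Definition Fhat_c (X : ArrOb A) : Hom (F (a_tgt X)) (Fhat_ob X) :=
  projT1 (projT2 (Fhat_cokernel_data X)).
Definition Fhat_gam (X : ArrOb A) : NH T (F (a_src X)) (Fhat_ob X) :=
  proj1_sig (projT2 (projT2 (Fhat_cokernel_data X))).
Definition Fhat_scok (X : ArrOb A) :
  is_strong_cokernel T (fmap F (a_arr X)) (Fhat_ob X) (Fhat_c X) (Fhat_gam X) :=
  proj2_sig (projT2 (projT2 (Fhat_cokernel_data X))).
Definition Fhat_cok (X : ArrOb A) := strong_cokernel_cokernel (Fhat_scok X).

Lemma Fhat_gam_bd X : bd T (Fhat_gam X) = fmap F (a_arr X) ⋅ Fhat_c X.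
Proof. exact (cokernel_bd (Fhat_cok X)). Qed.

Lemma Fhat_map_spec {X Y : ArrOb A} (u : ArrHom X Y) :
  {h : Hom (Fhat_ob X) (Fhat_ob Y) | Fhat_c X ⋅ h = fmap F (ah_bot u) ⋅ Fhat_c Y /\
  wh T (idm _) (Fhat_gam X) h = wh T (fmap F (ah_top u)) (Fhat_gam Y) (idm _)}.
Proof.
  apply (cokernel_factor (Fhat_cok X)).
  rewrite bd_wh, Fhat_gam_bd, comp_id_r, <- !comp_assoc, <- !fmap_comp, ah_sq; reflexivity.
Qed.

Definition Fhat_map {X Y : ArrOb A} (u : ArrHom X Y) : Hom (Fhat_ob X) (Fhat_ob Y) :=
  proj1_sig (Fhat_map_spec u).

Lemma Fhat_map_c {X Y} (u : ArrHom X Y) : Fhat_c X ⋅ Fhat_map u = fmap F (ah_bot u) ⋅ Fhat_c Y.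
Proof. exact (proj1 (proj2_sig (Fhat_map_spec u))). Qed.

Lemma Fhat_map_gam {X Y} (u : ArrHom X Y) :
  wh T (idm _) (Fhat_gam X) (Fhat_map u) = wh T (fmap F (ah_top u)) (Fhat_gam Y) (idm _).
Proof. exact (proj2 (proj2_sig (Fhat_map_spec u))). Qed.

Lemma Fhat_map_gam_wh {X Y} (u : ArrHom X Y) W Z (f : Hom W (F (a_src X))) (k : Hom (Fhat_ob Y) Z) :
  wh T f (Fhat_gam X) (Fhat_map u ⋅ k) = wh T (f ⋅ fmap F (ah_top u)) (Fhat_gam Y) k.
Proof.
  rewrite <- (comp_id_r f) at 1. rewrite <- (comp_id_r (fmap F (ah_top u))).
  rewrite <- !wh_wh, Fhat_map_gam, !wh_wh; wh_norm; reflexivity.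
Qed.

Lemma Fhat_map_gam_l {X Y} (u : ArrHom X Y) W (f : Hom W (F (a_src X))) :
  wh T f (Fhat_gam X) (Fhat_map u) = wh T (f ⋅ fmap F (ah_top u)) (Fhat_gam Y) (idm _).
Proof. rewrite <- (comp_id_r (Fhat_map u)), Fhat_map_gam_wh; reflexivity. Qed.

Lemma Fhat_map_c_r {X Y} (u : ArrHom X Y) V (k : Hom (Fhat_ob Y) V) :
  Fhat_c X ⋅ (Fhat_map u ⋅ k) = fmap F (ah_bot u) ⋅ (Fhat_c Y ⋅ k).
Proof. apply comp_square_r, Fhat_map_c. Qed.

Lemma Fhat_map_gam_r {X Y} (u : ArrHom X Y) Z (k : Hom (Fhat_ob Y) Z) :
  wh T (idm _) (Fhat_gam X) (Fhat_map u ⋅ k) = wh T (fmap F (ah_top u)) (Fhat_gam Y) k.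
Proof. rewrite Fhat_map_gam_wh, comp_id_l; reflexivity. Qed.

Lemma Fhat_map_id X : Fhat_map (arr_id X) = idm (Fhat_ob X).
Proof.
  apply (cokernel_hom_ext (Fhat_cok X)).
  - rewrite Fhat_map_c; simpl; rewrite fmap_id; wh_norm; reflexivity.
  - rewrite Fhat_map_gam; simpl; rewrite fmap_id; reflexivity.
Qed.

Lemma Fhat_map_comp X Y Z (u : ArrHom X Y) (v : ArrHom Y Z) :
  Fhat_map (arr_comp X Y Z u v) = Fhat_map u ⋅ Fhat_map v.
Proof.
  apply (cokernel_hom_ext (Fhat_cok X)).
  - rewrite Fhat_map_c, (comp_square_r (Fhat_map_c u)), Fhat_map_c; simpl; rewrite fmap_comp.
    wh_norm; reflexivity.
  - rewrite Fhat_map_gam, Fhat_map_gam_wh, Fhat_map_gam_l; simpl; rewrite fmap_comp.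
    wh_norm; reflexivity.
Qed.

Program Definition FhatF : Functor (Arr A) B :=
  {| fob := Fhat_ob; fmap := fun X Y u => Fhat_map u |}.
Next Obligation. apply Fhat_map_id. Qed.
Next Obligation. apply Fhat_map_comp. Qed.

Lemma Fhat_nh_spec {X Y : ArrOb A} (p : Hom (a_tgt X) (a_src Y)) :
  {p' : NH T (Fhat_ob X) (Fhat_ob Y) | bd T p' = Fhat_map (arr_bd X Y p) /\
    wh T (Fhat_c X) p' (idm _) = wh T (fmap F p) (Fhat_gam Y) (idm _)}.
Proof.
  apply (strong_cokernel_lift (Fhat_scok X)).
  - rewrite bd_wh, Fhat_gam_bd, Fhat_map_c; simpl; rewrite fmap_comp; wh_norm; reflexivity.
  - rewrite Fhat_map_gam_l, wh_wh; simpl; rewrite fmap_comp; wh_norm; reflexivity.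
Qed.

Definition Fhat_nh {X Y : ArrOb A} (p : Hom (a_tgt X) (a_src Y)) : NH T (Fhat_ob X) (Fhat_ob Y) :=
  proj1_sig (Fhat_nh_spec p).

Lemma Fhat_nh_bd {X Y : ArrOb A} (p : Hom (a_tgt X) (a_src Y)) :
  bd T (Fhat_nh p) = Fhat_map (arr_bd X Y p).
Proof. exact (proj1 (proj2_sig (Fhat_nh_spec p))). Qed.

Lemma Fhat_nh_c {X Y : ArrOb A} (p : Hom (a_tgt X) (a_src Y)) :
  wh T (Fhat_c X) (Fhat_nh p) (idm _) = wh T (fmap F p) (Fhat_gam Y) (idm _).
Proof. exact (proj2 (proj2_sig (Fhat_nh_spec p))). Qed.

Lemma Fhat_nh_c_wh {X Y : ArrOb A} (p : Hom (a_tgt X) (a_src Y)) W Z (f : Hom W (F (a_tgt X)))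
  (k : Hom (Fhat_ob Y) Z) :
  wh T (f ⋅ Fhat_c X) (Fhat_nh p) k = wh T (f ⋅ fmap F p) (Fhat_gam Y) k.
Proof. rewrite <- (comp_id_l k), <- wh_wh, Fhat_nh_c, wh_wh; wh_norm; reflexivity. Qed.

Lemma Fhat_nh_c_r {X Y : ArrOb A} (p : Hom (a_tgt X) (a_src Y)) Z (k : Hom (Fhat_ob Y) Z) :
  wh T (Fhat_c X) (Fhat_nh p) k = wh T (fmap F p) (Fhat_gam Y) k.
Proof. rewrite <- (comp_id_l (Fhat_c X)), Fhat_nh_c_wh, comp_id_l; reflexivity. Qed.

Lemma Fhat_nh_wh X0 X1 X2 X3 (f : ArrHom X0 X1) (p : Hom (a_tgt X1) (a_src X2)) (h : ArrHom X2 X3) :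
  Fhat_nh (ah_bot f ⋅ p ⋅ ah_top h) = wh T (Fhat_map f) (Fhat_nh p) (Fhat_map h).
Proof.
  apply (strong_cokernel_nh_ext HRI (Fhat_scok X0))
    with (h := Fhat_map (arr_bd X0 X3 (ah_bot f ⋅ p ⋅ ah_top h))).
  - apply Fhat_nh_bd.
  - rewrite bd_wh, Fhat_nh_bd, <- !Fhat_map_comp. f_equal. apply ArrHom_eq; simpl.
    + rewrite <- !comp_assoc, (ah_sq f); reflexivity.
    + rewrite !comp_assoc, (ah_sq h); reflexivity.
  - rewrite Fhat_nh_c, wh_wh, comp_id_r, Fhat_map_c, Fhat_nh_c_wh, Fhat_map_gam_l, !fmap_comp;
      wh_norm; reflexivity.
Qed.

Program Definition Fhat : NHMorphism (ThetaDelta A) T :=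
  {| nhF := FhatF; nhmap := fun X Y p => Fhat_nh p |}.
Next Obligation. apply Fhat_nh_bd. Qed.
Next Obligation. apply Fhat_nh_wh. Qed.

Variables (I0 : A) (init : forall X : A, Hom I0 X) (Hinit : is_initial I0 init).
Notation Γ := (GammaF A I0 init Hinit).

(* [Fhat_c (Γ X)] is split mono: [F (init X)] carries a nullhomotopy because F I0 is a
   strong initial object. *)
Lemma Gamma_counit_spec (X : A) : {h : Hom (Fhat_ob (Γ X)) (F X) | Fhat_c (Γ X) ⋅ h = idm _}.
Proof.
  destruct (F_initial_nh Hinit (fmap F (init X) ⋅ idm (F X))) as [p Hp].
  destruct (cokernel_factor (Fhat_cok (Γ X)) (Z := F X) (h := idm (F X)) (p := p) Hp)
    as [h [H1 _]].
  exists h; exact H1.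
Qed.

Definition Gamma_counit X := proj1_sig (Gamma_counit_spec X).

Lemma Gamma_counit_c X : Fhat_c (Γ X) ⋅ Gamma_counit X = idm _.
Proof. exact (proj2_sig (Gamma_counit_spec X)). Qed.

Lemma Fhat_Gamma_iso : nat_iso (fcomp Γ FhatF) F.
Proof.
  exists Gamma_counit, (fun X => Fhat_c (Γ X)).
  assert (Nb : natural F (fcomp Γ FhatF) (fun X => Fhat_c (Γ X))).
  { intros X Y f. simpl. symmetry; apply (Fhat_map_c (X := Γ X) (Y := Γ Y)). }
  split; [|split; [exact Nb|split]].
  - intros X Y f. simpl.
    apply (cokernel_hom_ext (Fhat_cok (Γ X))); [|apply (F_initial_nh_ext Hinit)].
    rewrite (comp_square_r (Fhat_map_c (X := Γ X) (Y := Γ Y) _)), Gamma_counit_c, <- comp_assoc,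
      Gamma_counit_c; simpl; wh_norm; reflexivity.
  - intros X. apply (cokernel_hom_ext (Fhat_cok (Γ X))); [|apply (F_initial_nh_ext Hinit)].
    rewrite <- comp_assoc, Gamma_counit_c; wh_norm; reflexivity.
  - intros X. apply Gamma_counit_c.
Qed.

Variable (HA : has_finite_colimits A).

Section PushoutSquare.
Variables (X Y K : ArrOb A) (g : ArrHom X Y) (c : ArrHom Y K) (gam : Hom (a_tgt X) (a_src K))
  (m0 : Hom (a_tgt K) (a_tgt Y)).
Hypotheses (Hgam_top : a_arr X ⋅ gam = ah_top g ⋅ ah_top c)
  (Hgam_bot : gam ⋅ a_arr K = ah_bot g ⋅ ah_bot c)
  (HP : is_pushout (a_arr X) (ah_top g) gam (ah_top c))
  (Hm0_r : ah_bot c ⋅ m0 = idm _) (Hm0_l : m0 ⋅ ah_bot c = idm _).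

Lemma F_gam_arr_m0 Z (z : Hom (F (a_tgt Y)) Z) :
  fmap F gam ⋅ (fmap F (a_arr K) ⋅ (fmap F m0 ⋅ z)) = fmap F (ah_bot g) ⋅ z.
Proof.
  rewrite <- !comp_assoc, <- !fmap_comp, Hgam_bot, comp_assoc, Hm0_r, comp_id_r; reflexivity.
Qed.

Lemma F_top_c_arr_m0 Z (z : Hom (F (a_tgt Y)) Z) :
  fmap F (ah_top c) ⋅ (fmap F (a_arr K) ⋅ (fmap F m0 ⋅ z)) = fmap F (a_arr Y) ⋅ z.
Proof.
  rewrite <- !comp_assoc, <- !fmap_comp, <- ah_sq, comp_assoc, Hm0_r, comp_id_r; reflexivity.
Qed.

Lemma F_bot_c_m0 Z (z : Hom (F (a_tgt Y)) Z) : fmap F (ah_bot c) ⋅ (fmap F m0 ⋅ z) = z.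
Proof. rewrite <- comp_assoc, <- fmap_comp, Hm0_r, fmap_id, comp_id_l; reflexivity. Qed.

Lemma F_m0_bot_c Z (z : Hom (F (a_tgt K)) Z) : fmap F m0 ⋅ (fmap F (ah_bot c) ⋅ z) = z.
Proof. rewrite <- comp_assoc, <- fmap_comp, Hm0_l, fmap_id, comp_id_l; reflexivity. Qed.

Lemma Fhat_nh_square_bd : bd T (Fhat_nh gam) = Fhat_map g ⋅ Fhat_map c.
Proof. rewrite Fhat_nh_bd, <- Fhat_map_comp. f_equal. apply ArrHom_eq; simpl; auto. Qed.

(* The factorization through Fhat K is glued, along the strong pushout F (a_src K),
   from the two nullhomotopies [Fhat_c X o p] and [Fhat_gam Y o h]. *)
Lemma Fhat_square_cokernel : is_cokernel T (Fhat_map g) (Fhat_ob K) (Fhat_map c) (Fhat_nh gam).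
Proof.
  split; [exact Fhat_nh_square_bd|].
  intros Z h p Hp.
  set (h0 := fmap F m0 ⋅ (Fhat_c Y ⋅ h)).
  set (q := wh T (Fhat_c X) p (idm Z)).
  set (ph := wh T (idm _) (Fhat_gam Y) h).
  assert (Ea : bd T q = fmap F gam ⋅ (fmap F (a_arr K) ⋅ h0)).
  { unfold q, h0. rewrite F_gam_arr_m0, bd_wh, Hp; wh_norm. rewrite Fhat_map_c_r; reflexivity. }
  assert (Eb : bd T ph = fmap F (ah_top c) ⋅ (fmap F (a_arr K) ⋅ h0)).
  { unfold ph, h0. rewrite F_top_c_arr_m0, bd_wh, Fhat_gam_bd; wh_norm; reflexivity. }
  assert (Ec : wh T (fmap F (a_arr X)) q (idm Z) = wh T (fmap F (ah_top g)) ph (idm Z)).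
  { unfold q, ph. wh_norm. rewrite <- (HRI (Fhat_gam_bd X) Hp), Fhat_map_gam_r; reflexivity. }
  destruct (F_pushout_nh_lift HP Ea Eb Ec) as [pp [PP1 [PP2 PP3]]].
  assert (Char : forall h' : Hom (Fhat_ob K) Z, Fhat_map c ⋅ h' = h ->
    wh T (idm _) (Fhat_nh gam) h' = p -> Fhat_c K ⋅ h' = h0 /\ wh T (idm _) (Fhat_gam K) h' = pp).
  { intros h' C1 C2.
    assert (C3 : Fhat_c K ⋅ h' = h0).
    { unfold h0. rewrite <- C1, Fhat_map_c_r, F_m0_bot_c; reflexivity. }
    split; [exact C3|].
    apply (F_pushout_nh_ext HP).
    - rewrite PP1, bd_wh, Fhat_gam_bd; wh_norm; rewrite C3; reflexivity.
    - rewrite PP2; unfold q; rewrite <- C2; wh_norm. rewrite Fhat_nh_c_r; reflexivity.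
    - rewrite PP3; unfold ph; rewrite <- C1; wh_norm. rewrite Fhat_map_gam_r; reflexivity. }
  destruct (cokernel_factor (Fhat_cok K) (Z := Z) (h := h0) (p := pp) PP1) as [hh [H1 H2]].
  assert (D1 : Fhat_map c ⋅ hh = h).
  { apply (cokernel_hom_ext (Fhat_cok Y)).
    - rewrite Fhat_map_c_r, H1. unfold h0. rewrite F_bot_c_m0; reflexivity.
    - rewrite Fhat_map_gam_r, (wh_inner_r (fmap F (ah_top c)) (Fhat_gam K) hh), H2, PP3; reflexivity. }
  exists hh. split; [split; [exact D1|]|].
  - apply (strong_cokernel_nh_ext HRI (Fhat_scok X)) with (h := Fhat_map g ⋅ h); auto.
    + rewrite bd_wh, Fhat_nh_square_bd, comp_id_l, comp_assoc, D1; reflexivity.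
    + wh_norm. rewrite Fhat_nh_c_r, (wh_inner_r (fmap F gam) (Fhat_gam K) hh), H2, PP2; reflexivity.
  - intros h' [C1 C2]. destruct (Char h' C1 C2) as [C3 C4].
    apply (cokernel_hom_ext (Fhat_cok K)); [rewrite C3, H1|rewrite C4, H2]; reflexivity.
Qed.

Lemma Fhat_square_strong_cokernel :
  is_strong_cokernel T (Fhat_map g) (Fhat_ob K) (Fhat_map c) (Fhat_nh gam).
Proof.
  split; [exact Fhat_square_cokernel|].
  intros Z hh p Hp Hq.
  set (r := wh T (fmap F m0 ⋅ Fhat_c Y) p (idm Z)).
  assert (Br : bd T r = Fhat_c K ⋅ hh).
  { unfold r. rewrite bd_wh, Hp; wh_norm. rewrite Fhat_map_c_r, F_m0_bot_c; reflexivity. }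
  assert (Cr : wh T (fmap F (a_arr K)) r (idm Z) = wh T (idm _) (Fhat_gam K) hh).
  { apply (F_pushout_nh_ext HP).
    - rewrite !bd_wh, Br, Fhat_gam_bd; wh_norm; reflexivity.
    - unfold r; wh_norm. rewrite F_gam_arr_m0, <- (Fhat_map_c g), wh_comp_l, Hq.
      wh_norm. rewrite Fhat_nh_c_r; reflexivity.
    - unfold r; wh_norm. rewrite F_top_c_arr_m0, <- (HRI (Fhat_gam_bd Y) Hp), Fhat_map_gam_r;
        reflexivity. }
  destruct (strong_cokernel_lift (Fhat_scok K) Br Cr) as [p' [P1 P2]].
  exists p'. split; [split; auto|].
  - apply (strong_cokernel_nh_ext HRI (Fhat_scok Y)) with (h := Fhat_map c ⋅ hh).
    + rewrite bd_wh, P1, comp_id_r; reflexivity.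
    + exact Hp.
    + wh_norm. rewrite Fhat_map_c, <- (comp_id_r (idm Z)), <- wh_wh, P2. unfold r. wh_norm.
      rewrite F_bot_c_m0; reflexivity.
  - intros p1 [B1 B2].
    apply (strong_cokernel_nh_ext HRI (Fhat_scok K)) with (h := hh); auto.
    rewrite P2. unfold r. rewrite <- B2. wh_norm. rewrite Fhat_map_c, F_m0_bot_c; reflexivity.
Qed.
End PushoutSquare.

Lemma Fhat_sends_cokernels : sends_cokernels_to_strong Fhat.
Proof.
  intros X Y g K c gam HK.
  destruct (arr_cokernel_pushout HA HK) as [HP [m0 [M1 M2]]].
  pose proof (cokernel_bd HK) as E.
  exact (Fhat_square_strong_cokernel (f_equal ah_top E) (f_equal ah_bot E) HP M1 M2).
Qed.

Section ColimitPreservation.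
Variables (D : Category) (H : Functor D (Arr A)) (X : ArrOb A) (i : forall d, Hom (H d) X).
Hypotheses (Hi : is_cocone H X i)
  (Hsrc : is_colimit (fcomp (fcomp H (arr_src A)) F) (F (a_src X)) (fun d => fmap F (ah_top (i d))))
  (Hsrc_strong :
    is_strong_colimit T (fcomp (fcomp H (arr_src A)) F) (F (a_src X)) (fun d => fmap F (ah_top (i d))))
  (Htgt : is_colimit (fcomp (fcomp H (arr_tgt A)) F) (F (a_tgt X)) (fun d => fmap F (ah_bot (i d))))
  (Htgt_strong :
    is_strong_colimit T (fcomp (fcomp H (arr_tgt A)) F) (F (a_tgt X)) (fun d => fmap F (ah_bot (i d)))).

Lemma Fhat_cocone : is_cocone (fcomp H FhatF) (FhatF X) (fun d => fmap FhatF (i d)).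
Proof. intros d d' e. simpl. rewrite <- Fhat_map_comp. f_equal. apply Hi. Qed.

(* The factorization is first built on [Fhat_c X], through the colimit F (a_tgt X),
   and then on [Fhat_gam X], through the strong colimit F (a_src X). *)
Lemma Fhat_colimit : is_colimit (fcomp H FhatF) (FhatF X) (fun d => fmap FhatF (i d)).
Proof.
  split; [exact Fhat_cocone|].
  intros Y t Ht0.
  assert (Ht : forall d d' (e : Hom d d'), Fhat_map (fmap H e) ⋅ t d' = t d) by exact Ht0.
  assert (Ct : is_cocone (fcomp (fcomp H (arr_tgt A)) F) Y (fun d => Fhat_c (H d) ⋅ t d)).
  { intros d d' e. simpl. rewrite <- (Ht d d' e), <- Fhat_map_c_r; reflexivity. }
  destruct (colimit_factor Htgt Ct) as [h0 Hh0]. simpl in Hh0.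
  destruct (strong_colimit_lift Hsrc_strong
    (ta := fun d => fmap F (a_arr (H d)) ⋅ (Fhat_c (H d) ⋅ t d))
    (tn := fun d => wh T (idm _) (Fhat_gam (H d)) (t d))) with (u := fmap F (a_arr X) ⋅ h0)
    as [p [Hp1 Hp2]].
  - intros d. simpl. rewrite bd_wh, Fhat_gam_bd; wh_norm; reflexivity.
  - intros d d' e. simpl.
    rewrite <- comp_assoc, F_ah_sq, comp_assoc, <- Fhat_map_c_r, Ht; reflexivity.
  - intros d d' e. simpl. rewrite wh_wh, !comp_id_r, <- (Ht d d' e), Fhat_map_gam_r; reflexivity.
  - intros d. simpl. rewrite <- comp_assoc, F_ah_sq, comp_assoc, Hh0; reflexivity.
  - simpl in Hp2.
    assert (Char : forall u' : Hom (Fhat_ob X) Y, (forall d, Fhat_map (i d) ⋅ u' = t d) ->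
      Fhat_c X ⋅ u' = h0 /\ wh T (idm _) (Fhat_gam X) u' = p).
    { intros u' Hu'.
      assert (Z1 : Fhat_c X ⋅ u' = h0).
      { apply (colimit_hom_ext Htgt). intros d. simpl. rewrite Hh0, <- Fhat_map_c_r, Hu'; reflexivity. }
      split; [exact Z1|].
      apply (strong_colimit_nh_ext Hsrc Hsrc_strong).
      - rewrite Hp1, bd_wh, Fhat_gam_bd; wh_norm; rewrite Z1; reflexivity.
      - intros d. simpl. rewrite Hp2, wh_wh, !comp_id_r, <- (Hu' d), Fhat_map_gam_r; reflexivity. }
    destruct (cokernel_factor (Fhat_cok X) (Z := Y) (h := h0) (p := p) Hp1) as [u [U1 U2]].
    exists u. split.
    + intros d. change (Fhat_map (i d) ⋅ u = t d). apply (cokernel_hom_ext (Fhat_cok (H d))).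
      * rewrite Fhat_map_c_r, U1, Hh0; reflexivity.
      * rewrite Fhat_map_gam_r, (wh_inner_r (fmap F (ah_top (i d))) (Fhat_gam X) u), U2, Hp2;
          reflexivity.
    + intros u' Hu'. destruct (Char u' Hu') as [Z1 Z2].
      apply (cokernel_hom_ext (Fhat_cok X)); [rewrite U1, Z1|rewrite U2, Z2]; reflexivity.
Qed.

Lemma Fhat_strong_colimit :
  is_strong_colimit T (fcomp H FhatF) (FhatF X) (fun d => fmap FhatF (i d)).
Proof.
  intros Y ta tn Htn Hta0 Htn0 u Hu0.
  assert (Hta : forall d d' (e : Hom d d'), Fhat_map (fmap H e) ⋅ ta d' = ta d) by exact Hta0.
  assert (Htn' : forall d d' (e : Hom d d'), wh T (Fhat_map (fmap H e)) (tn d') (idm Y) = tn d)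
    by exact Htn0.
  assert (Hu : forall d, Fhat_map (i d) ⋅ u = ta d) by exact Hu0.
  assert (Htn1 : forall d, bd T (X := Fhat_ob (H d)) (tn d) = ta d) by exact Htn.
  destruct (strong_colimit_lift Htgt_strong (ta := fun d => Fhat_c (H d) ⋅ ta d)
    (tn := fun d => wh T (Fhat_c (H d)) (tn d) (idm Y))) with (u := Fhat_c X ⋅ u)
    as [q [Hq1 Hq2]].
  - intros d. simpl. rewrite bd_wh, Htn1, comp_id_r; reflexivity.
  - intros d d' e. simpl. rewrite <- Fhat_map_c_r, Hta; reflexivity.
  - intros d d' e. simpl. rewrite wh_wh, comp_id_l, <- Fhat_map_c, wh_comp_l, Htn'; reflexivity.
  - intros d. simpl. rewrite <- Fhat_map_c_r, Hu; reflexivity.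
  - simpl in Hq2.
    assert (Cq : wh T (fmap F (a_arr X)) q (idm Y) = wh T (idm _) (Fhat_gam X) u).
    { apply (strong_colimit_nh_ext Hsrc Hsrc_strong).
      - rewrite !bd_wh, Hq1, Fhat_gam_bd; wh_norm; reflexivity.
      - intros d. simpl.
        rewrite !wh_wh, !comp_id_l, !comp_id_r, F_ah_sq, wh_comp_l, Hq2, wh_wh, comp_id_l.
        rewrite <- (HRI (Fhat_gam_bd (H d)) (Htn1 d)), <- Hu, Fhat_map_gam_r; reflexivity. }
    destruct (strong_cokernel_lift (Fhat_scok X) Hq1 Cq) as [un [Un1 Un2]].
    exists un. split.
    + split; [exact Un1|]. intros d.
      apply (strong_cokernel_nh_ext HRI (Fhat_scok (H d))) with (h := ta d); auto.
      * simpl. rewrite bd_wh, Un1, comp_id_r, Hu; reflexivity.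
      * simpl. rewrite wh_wh, comp_id_l, Fhat_map_c, wh_comp_l, Un2, Hq2; reflexivity.
    + intros un' [B1 B2]. simpl in B1, B2.
      apply (strong_cokernel_nh_ext HRI (Fhat_scok X)) with (h := u); auto.
      rewrite Un2. apply (strong_colimit_nh_ext Htgt Htgt_strong).
      * rewrite Hq1, bd_wh, B1, comp_id_r; reflexivity.
      * intros d. simpl. rewrite Hq2, wh_wh, comp_id_l, <- Fhat_map_c, wh_comp_l, B2; reflexivity.
Qed.
End ColimitPreservation.

Lemma Fhat_preserves_colimits : preserves_finite_colimits_strong FhatF T.
Proof.
  intros D HD H X i Hi.
  destruct (arr_colimit_pointwise HA HD Hi) as [Hsrc Htgt].
  destruct (Ha HD Hsrc) as [Fsrc Fsrc_strong]. destruct (Ha HD Htgt) as [Ftgt Ftgt_strong].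
  split.
  - exact (Fhat_colimit (proj1 Hi) Fsrc Fsrc_strong Ftgt).
  - exact (Fhat_strong_colimit Fsrc Fsrc_strong Ftgt Ftgt_strong).
Qed.

End Extension.

Section Uniqueness.
Variables (A B : Category) (T : NHStruct B) (HRI : reduced_interchange T)
  (I0 : A) (init : forall X : A, Hom I0 X) (Hinit : is_initial I0 init).
Notation Γ := (GammaF A I0 init Hinit).
Notation Td := (ThetaDelta A).

Lemma arr_cok_c_sq (X : ArrOb A) : a_arr (Γ (a_tgt X)) ⋅ idm _ = init (a_src X) ⋅ a_arr X.
Proof. simpl. rewrite comp_id_r. symmetry; apply Hinit. Qed.

Definition arr_cok_c (X : ArrOb A) : ArrHom (Γ (a_tgt X)) X :=
  @Build_ArrHom A (Γ (a_tgt X)) X (init (a_src X)) (idm _) (arr_cok_c_sq X).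

Definition arr_cok_gam (X : ArrOb A) : NH Td (Γ (a_src X)) X := idm (a_src X).

Lemma arr_Gamma_cokernel (X : ArrOb A) :
  is_cokernel Td (fmap Γ (a_arr X)) X (arr_cok_c X) (arr_cok_gam X).
Proof.
  split.
  - apply ArrHom_eq; simpl; rewrite ?comp_id_l, ?comp_id_r; auto.
  - intros Z h p Hp.
    assert (P2 : p ⋅ a_arr Z = a_arr X ⋅ ah_bot h) by exact (f_equal ah_bot Hp).
    exists (@Build_ArrHom A X Z p (ah_bot h) (eq_sym P2)). split.
    + split.
      * apply ArrHom_eq; simpl.
        -- etransitivity; [apply Hinit|symmetry; apply Hinit].
        -- apply comp_id_l.
      * simpl. rewrite comp_id_l, comp_id_l; reflexivity.
    + intros h' [H1 H2]. apply ArrHom_eq; simpl.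
      * rewrite <- H2; simpl; rewrite !comp_id_l; reflexivity.
      * rewrite <- H1; simpl; rewrite comp_id_l; reflexivity.
Qed.

Lemma arr_cok_c_natural {X Y : ArrOb A} (f : ArrHom X Y) :
  (arr_cok_c X : Hom (c:=Arr A) _ _) ⋅ f = fmap Γ (ah_bot f) ⋅ (arr_cok_c Y : Hom (c:=Arr A) _ _).
Proof.
  apply ArrHom_eq; simpl.
  - etransitivity; [apply Hinit|symmetry; apply Hinit].
  - rewrite comp_id_l, comp_id_r; reflexivity.
Qed.

Section MorphismOnGammaCokernels.
Variable (G : NHMorphism Td T).

Lemma nhmor_arr_cok_gam {X Y : ArrOb A} (f : ArrHom X Y) :
  wh T (idm _) (nhmap G (arr_cok_gam X)) (fmap G f) =
  wh T (fmap G (fmap Γ (ah_top f))) (nhmap G (arr_cok_gam Y)) (idm _).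
Proof.
  rewrite <- (fmap_id G), <- nhmap_wh, <- (fmap_id G), <- nhmap_wh. f_equal.
  simpl. rewrite !comp_id_l, !comp_id_r; reflexivity.
Qed.

Lemma nhmor_arr_cok_c {X Y : ArrOb A} (p : Hom (a_tgt X) (a_src Y)) :
  wh T (fmap G (arr_cok_c X)) (nhmap G (p : NH Td X Y)) (idm _) =
  wh T (fmap G (fmap Γ p)) (nhmap G (arr_cok_gam Y)) (idm _).
Proof.
  rewrite <- (fmap_id G), <- !nhmap_wh. f_equal.
  simpl. rewrite !comp_id_l, !comp_id_r; reflexivity.
Qed.
End MorphismOnGammaCokernels.

Section InducedTwoMorphism.
Variables (G1 G2 : NHMorphism Td T) (HG1 : sends_cokernels_to_strong G1)
  (beta : forall Y : A, Hom (nhF G1 (Γ Y)) (nhF G2 (Γ Y)))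
  (Nbeta : natural (fcomp Γ (nhF G1)) (fcomp Γ (nhF G2)) beta).

Lemma beta_natural {Y Z : A} (f : Hom Y Z) :
  fmap G1 (fmap Γ f) ⋅ beta Z = beta Y ⋅ fmap G2 (fmap Γ f).
Proof. exact (Nbeta f). Qed.

Lemma beta_natural_r {Y Z : A} (f : Hom Y Z) V (k : Hom (nhF G2 (Γ Z)) V) :
  fmap G1 (fmap Γ f) ⋅ (beta Z ⋅ k) = beta Y ⋅ (fmap G2 (fmap Γ f) ⋅ k).
Proof. apply comp_square_r, beta_natural. Qed.

Lemma induced_2mor_spec (X : ArrOb A) : {h : Hom (nhF G1 X) (nhF G2 X) |
  fmap G1 (arr_cok_c X) ⋅ h = beta (a_tgt X) ⋅ fmap G2 (arr_cok_c X) /\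
  wh T (idm _) (nhmap G1 (arr_cok_gam X)) h =
  wh T (beta (a_src X)) (nhmap G2 (arr_cok_gam X)) (idm _)}.
Proof.
  apply (cokernel_factor (strong_cokernel_cokernel (HG1 (arr_Gamma_cokernel X)))).
  rewrite bd_wh, nhmap_bd, (cokernel_bd (arr_Gamma_cokernel X)), comp_id_r, !fmap_comp,
    beta_natural_r; reflexivity.
Qed.

Definition induced_2mor X := proj1_sig (induced_2mor_spec X).

Lemma induced_2mor_c X :
  fmap G1 (arr_cok_c X) ⋅ induced_2mor X = beta (a_tgt X) ⋅ fmap G2 (arr_cok_c X).
Proof. exact (proj1 (proj2_sig (induced_2mor_spec X))). Qed.

Lemma induced_2mor_gam X :
  wh T (idm _) (nhmap G1 (arr_cok_gam X)) (induced_2mor X) =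
  wh T (beta (a_src X)) (nhmap G2 (arr_cok_gam X)) (idm _).
Proof. exact (proj2 (proj2_sig (induced_2mor_spec X))). Qed.

Lemma induced_2mor_natural : natural (nhF G1) (nhF G2) induced_2mor.
Proof.
  intros X Y f. apply (cokernel_hom_ext (strong_cokernel_cokernel (HG1 (arr_Gamma_cokernel X)))).
  - rewrite <- comp_assoc, <- fmap_comp, arr_cok_c_natural, fmap_comp, comp_assoc,
      induced_2mor_c, beta_natural_r, <- fmap_comp, <- arr_cok_c_natural, fmap_comp,
      <- !comp_assoc, induced_2mor_c; reflexivity.
  - rewrite (wh_extend_eq (nhmor_arr_cok_gam G1 f)), (wh_extend_eq (induced_2mor_gam X)),
      !comp_id_l, (wh_extend_eq_l (induced_2mor_gam Y)), (wh_extend_eq_l (nhmor_arr_cok_gam G2 f)),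
      beta_natural; reflexivity.
Qed.

Lemma induced_2mor_two : two_morphism G1 G2 induced_2mor.
Proof.
  split; [exact induced_2mor_natural|].
  intros X Y p.
  apply (strong_cokernel_nh_ext HRI (HG1 (arr_Gamma_cokernel X)))
    with (h := induced_2mor X ⋅ fmap G2 (bd Td p)).
  - rewrite bd_wh, nhmap_bd, comp_id_r; reflexivity.
  - rewrite bd_wh, nhmap_bd, comp_id_l, induced_2mor_natural; reflexivity.
  - rewrite !wh_wh, !comp_id_l, !comp_id_r, induced_2mor_c, (wh_precomp_eq (nhmor_arr_cok_c G2 p)),
      (wh_postcomp_eq (nhmor_arr_cok_c G1 p)), (wh_extend_eq_l (induced_2mor_gam Y)), beta_natural;
      reflexivity.
Qed.
End InducedTwoMorphism.

Section InducedInverse.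
Variables (G1 G2 : NHMorphism Td T) (HG1 : sends_cokernels_to_strong G1)
  (HG2 : sends_cokernels_to_strong G2)
  (beta : forall Y : A, Hom (nhF G1 (Γ Y)) (nhF G2 (Γ Y)))
  (beta' : forall Y : A, Hom (nhF G2 (Γ Y)) (nhF G1 (Γ Y)))
  (Nbeta : natural (fcomp Γ (nhF G1)) (fcomp Γ (nhF G2)) beta)
  (Nbeta' : natural (fcomp Γ (nhF G2)) (fcomp Γ (nhF G1)) beta').
Hypothesis (Hinv : forall Y, beta Y ⋅ beta' Y = idm _).

Lemma induced_2mor_inv X : induced_2mor HG1 Nbeta X ⋅ induced_2mor HG2 Nbeta' X = idm _.
Proof.
  apply (cokernel_hom_ext (strong_cokernel_cokernel (HG1 (arr_Gamma_cokernel X)))).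
  - rewrite <- comp_assoc, induced_2mor_c, comp_assoc, induced_2mor_c, comp_id_r,
      <- comp_assoc, Hinv, comp_id_l; reflexivity.
  - rewrite (wh_extend_eq (induced_2mor_gam HG1 Nbeta X)), comp_id_l,
      (wh_extend_eq_l (induced_2mor_gam HG2 Nbeta' X)), Hinv; reflexivity.
Qed.
End InducedInverse.

Lemma cokernel_preserving_unique (F : Functor A B) (G1 G2 : NHMorphism Td T) :
  sends_cokernels_to_strong G1 -> nat_iso (fcomp Γ (nhF G1)) F ->
  sends_cokernels_to_strong G2 -> nat_iso (fcomp Γ (nhF G2)) F -> nh_iso G1 G2.
Proof.
  intros HG1 [a1 [b1 [Na1 [Nb1 [I1 J1]]]]] HG2 [a2 [b2 [Na2 [Nb2 [I2 J2]]]]].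
  pose proof (natural_comp Na1 Nb2) as N12.
  pose proof (natural_comp Na2 Nb1) as N21.
  exists (induced_2mor HG1 N12), (induced_2mor HG2 N21).
  split; [apply induced_2mor_two|split; [apply induced_2mor_two|split]];
    intros X; apply induced_2mor_inv; intros Y; apply iso_comp_inv;
    first [apply I1 | apply I2 | apply J1 | apply J2].
Qed.
End Uniqueness.

Theorem proposition4p1 (A B : Category)
  (HA : has_finite_colimits A)
  (I0 : A) (init : forall X : A, Hom I0 X) (Hinit : is_initial I0 init)
  (T : NHStruct B) (HRI : reduced_interchange T)
  (F : Functor A B)
  (Ha : preserves_finite_colimits_strong F T)
  (Hb : forall (X Y : A) (a : Hom X Y), has_strong_cokernel T (fmap F a)) :
  (exists Fh : NHMorphism (ThetaDelta A) T,
      sends_cokernels_to_strong Fh /\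
      nat_iso (fcomp (GammaF A I0 init Hinit) (nhF Fh)) F /\
      preserves_finite_colimits_strong (nhF Fh) T)
  /\
  (forall G1 G2 : NHMorphism (ThetaDelta A) T,
      sends_cokernels_to_strong G1 -> nat_iso (fcomp (GammaF A I0 init Hinit) (nhF G1)) F ->
      sends_cokernels_to_strong G2 -> nat_iso (fcomp (GammaF A I0 init Hinit) (nhF G2)) F ->
      nh_iso G1 G2).
Proof.
  split.
  - exists (Fhat HRI Hb). split; [exact (Fhat_sends_cokernels HRI Ha Hb HA)|split].
    + exact (Fhat_Gamma_iso Ha Hb Hinit).
    + exact (Fhat_preserves_colimits HRI Ha Hb HA).
  - intros G1 G2. apply (cokernel_preserving_unique HRI).
Qed.
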